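(* For every integer $n\ge 1$, $\mathrm{Int}_c(6n+1)=\{0,1,2,\ldots,n\}$.
   Context: For a positive integer $v$, a cyclic Steiner triple system CSTS$(v)$ is a set $\mathcal B$ of 3-element subsets (blocks) of $\mathbb Z_v$ such that every 2-element subset of $\mathbb Z_v$ lies in exactly one block, and $\mathcal B$ is invariant under the translation $x\mapsto x+1$. The blocks of such a system split into orbits under translation; a base block is a representative of an orbit. Two CSTS$(v)$ have $k$ base blocks in common if exactly $k$ translation orbits of blocks are shared by the two systems. $\mathrm{Int}_c(v)$ denotes the set of integers $k$ such that there exist two CSTS$(v)$ with exactly $k$ base blocks in common. *)

From mathcomp Require Import all_boot.
Set Implicit Arguments. Unset Strict Implicit. Unset Printing Implicit Defensive.

(* Points of Z_v are represented by 'I_v; translation x |-> x+1 (mod v) is ordS. *)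
Definition translate (v : nat) (b : {set 'I_v}) : {set 'I_v} := [set ordS x | x in b].

Definition is_CSTS (v : nat) (B : {set {set 'I_v}}) : Prop :=
  [/\ (forall b, b \in B -> #|b| = 3),
      (forall x y : 'I_v, x != y -> #|[set b in B | (x \in b) && (y \in b)]| = 1)
    & (forall b, b \in B -> translate b \in B)].

Definition block_orbit (v : nat) (b : {set 'I_v}) : {set {set 'I_v}} :=
  [set iter k (@translate v) b | k : 'I_v].

Definition common_base_blocks (v : nat) (B1 B2 : {set {set 'I_v}}) : nat :=
  #|[set block_orbit b | b in B1 :&: B2]|.

Definition Int_c (v : nat) (k : nat) : Prop :=
  exists B1 B2 : {set {set 'I_v}},
    [/\ is_CSTS B1, is_CSTS B2 & common_base_blocks B1 B2 = k].

From mathcomp Require Import all_boot all_algebra zify ring.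
Set Implicit Arguments. Unset Strict Implicit. Unset Printing Implicit Defensive.
Import GRing.Theory.

(* A block {a, b, c} of a cyclic STS(v) with 3 coprime to v has six distinct nonzero
   differences, and two blocks of one system sharing a difference are translates of each
   other.  So the orbits shared by two systems have pairwise disjoint difference sets in
   Z_v \ {0}, and there are at most (v - 1) / 6 = n of them.
   Conversely, Peltesohn's solution of Heffter's first difference problem splits {1, ..., 3n}
   into triples (p, q, c) with c = +-(p + q) mod 6n + 1; the blocks {0, p, p + q} then form a
   difference family.  Negating all but k of its blocks gives another difference family whose
   development shares exactly k orbits with the first one, because a block is never a
   translate of the negative of a block of the family. *)

Local Open Scope ring_scope.

Section Translates.
Variable V : finZmodType.
Implicit Types (b : {set V}) (s t x y z : V).

Definition shift t b : {set V} := [set x + t | x in b].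
Definition negs b : {set V} := [set - x | x in b].
Definition offdiag b : {set V * V} := setX b b :\: [set (x, x) | x in b].
Definition diffs b : {set V} := [set xy.2 - xy.1 | xy in offdiag b].

Lemma mem_shift t b x : (x \in shift t b) = (x - t \in b).
Proof.
apply/imsetP/idP => [[y yb ->]|xtb]; first by rewrite addrK.
by exists (x - t); rewrite ?subrK.
Qed.

Lemma mem_negs b x : (x \in negs b) = (- x \in b).
Proof.
apply/imsetP/idP => [[y yb ->]|xb]; first by rewrite opprK.
by exists (- x); rewrite ?opprK.
Qed.

Lemma card_shift t b : #|shift t b| = #|b|.
Proof. by rewrite card_imset //; apply: addIr. Qed.

Lemma card_negs b : #|negs b| = #|b|.
Proof. by rewrite card_imset //; apply: oppr_inj. Qed.

Lemma shift0 b : shift 0 b = b.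
Proof. by apply/setP => x; rewrite mem_shift subr0. Qed.

Lemma shiftD s t b : shift s (shift t b) = shift (t + s) b.
Proof. by apply/setP => x; rewrite !mem_shift (addrC t) opprD addrA. Qed.

Lemma mem_offdiag b x y : ((x, y) \in offdiag b) = [&& x \in b, y \in b & x != y].
Proof.
rewrite !inE /=; case: eqVneq => [<-|xy]; last first.
  by rewrite andbT; case: imsetP => // -[z _ [ex ey]]; rewrite ex ey eqxx in xy.
by case xb: (x \in b); rewrite ?andbF // imset_f.
Qed.

Lemma card_offdiag b : #|offdiag b| = (#|b| * #|b| - #|b|)%N.
Proof.
rewrite cardsD cardsX (setIidPr _) ?card_imset // => [x y [] //|].
by apply/subsetP => _ /imsetP[x xb ->]; rewrite inE /= xb.
Qed.

Lemma diffsP b z :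
  reflect (exists x y, [/\ x \in b, y \in b, x != y & z = y - x]) (z \in diffs b).
Proof.
apply: (iffP imsetP) => [[[x y]]|[x [y [xb yb xy ->]]]].
  by rewrite mem_offdiag => /and3P[xb yb xy] ->; exists x, y.
by exists (x, y); rewrite // mem_offdiag xb yb.
Qed.

Lemma card_diffs b : {in offdiag b &, injective (fun xy => xy.2 - xy.1)} ->
  #|diffs b| = (#|b| * #|b| - #|b|)%N.
Proof. by move/card_in_imset->; rewrite card_offdiag. Qed.

Lemma diffs_shift t b : diffs (shift t b) = diffs b.
Proof.
apply/setP => z; apply/diffsP/diffsP => -[x [y [xb yb xy ->]]].
  rewrite !mem_shift in xb yb; exists (x - t), (y - t); split => //.
    by apply: contra xy => /eqP/addIr ->.
  by rewrite opprB addrA subrK.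
exists (x + t), (y + t); rewrite !mem_shift !addrK; split => //.
  by apply: contra xy => /eqP/addIr ->.
by rewrite opprD addrACA subrr addr0.
Qed.

Lemma diffs_neq0 b : 0 \notin diffs b.
Proof. by apply/diffsP => -[x [y [_ _ xy /eqP]]]; rewrite eq_sym subr_eq0 eq_sym (negbTE xy). Qed.

End Translates.

Section DifferenceFamilies.
Variables (V : finZmodType) (n : nat).
Implicit Types (S : 'I_n -> {set V}) (P : pred 'I_n).

Definition development S : {set {set V}} := [set shift t (S j) | j : 'I_n, t : V].

Definition difference_family S := [/\
  forall j, #|S j| = 3,
  forall z, z != 0 -> exists j a, a \in S j /\ a + z \in S j
  & forall j j' a a' z, z != 0 -> a \in S j -> a + z \in S j ->
      a' \in S j' -> a' + z \in S j' -> j = j' /\ a = a'].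

Definition flip_blocks S P j := if P j then negs (S j) else S j.

Lemma flip_blocks_pair S P j a z : a \in flip_blocks S P j -> a + z \in flip_blocks S P j ->
  exists2 c, c \in S j /\ c + z \in S j & a = if P j then - (c + z) else c.
Proof.
rewrite /flip_blocks; case: (P j) => [|aS azS]; last by exists a.
rewrite !mem_negs => aS azS; exists (- (a + z)); last by rewrite (opprD a) addrNK opprK.
by split; rewrite // (opprD a) addrNK.
Qed.

Lemma difference_family_flip S P :
  difference_family S -> difference_family (flip_blocks S P).
Proof.
move=> [S3 Scover Suniq]; split.
- by move=> j; rewrite /flip_blocks; case: (P j); rewrite ?card_negs.
- move=> z /Scover[j [a [aS azS]]]; exists j; rewrite /flip_blocks.
  case: (P j); last by exists a.
  by exists (- (a + z)); rewrite /= !mem_negs opprK (opprD a) addrNK opprK.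
move=> j j' a a' z z0 aF azF a'F a'zF.
have [c [cS czS] ->] := flip_blocks_pair aF azF.
have [c' [c'S c'zS] ->] := flip_blocks_pair a'F a'zF.
by have [<- <-] := Suniq _ _ _ _ _ z0 cS czS c'S c'zS.
Qed.

Lemma difference_family_shift_eq S j j' t t' : difference_family S ->
  shift t (S j) = shift t' (S j') -> j = j'.
Proof.
move=> [S3 _ Suniq] E.
have : (1 < #|S j|)%N by rewrite S3.
case/card_gt1P => a [b [aS bS ab]].
have z0 : b - a != 0 by rewrite subr_eq0 eq_sym.
have inS' x : x \in S j -> x + (t - t') \in S j'.
  by move=> xS; rewrite addrA -mem_shift -E mem_shift addrK.
have bS' : a + (t - t') + (b - a) \in S j' by rewrite addrAC subrKC inS'.
have abS : a + (b - a) \in S j by rewrite subrKC.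
by case: (Suniq _ _ _ _ _ z0 aS abS (inS' a aS) bS').
Qed.

Lemma difference_family_shift_negs S j j' t t' : difference_family S ->
  shift t (S j) != shift t' (negs (S j')).
Proof.
move=> [S3 _ Suniq]; apply/eqP => E; set d := t - t'.
have inS' x : x \in S j -> - (x + d) \in S j'.
  by move=> xS; rewrite -mem_negs addrA -mem_shift -E mem_shift addrK.
(* The difference y - x of S j reappears in S j' between -(y + d) and -(x + d). *)
have sum_eq x y : x \in S j -> y \in S j -> x != y -> x + y = - d.
  move=> xS yS xy; have z0 : y - x != 0 by rewrite subr_eq0 eq_sym.
  have xS' : - (y + d) + (y - x) \in S j'.
    by rewrite addrC [y - x]addrC addrKA -opprD inS'.
  have yS' : x + (y - x) \in S j by rewrite subrKC.
  have [_ ->] := Suniq _ _ _ _ _ z0 xS yS' (inS' y yS) xS'.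
  by rewrite opprD addrAC addNr add0r.
have : (2 < #|S j|)%N by rewrite S3.
case/card_gt2P => a [b [c [[aS bS cS] [ab bc ca]]]].
move: (sum_eq _ _ aS bS ab); rewrite -(sum_eq _ _ aS cS); last by rewrite eq_sym.
by move/addrI/eqP; rewrite (negbTE bc).
Qed.

End DifferenceFamilies.

Section CyclicSTS.
Variable m : nat.
Local Notation v := m.+2.
Implicit Types (B : {set {set 'I_v}}) (b : {set 'I_v}).

Lemma translate_shift b : translate b = shift 1 b.
Proof. by apply: eq_imset => x; exact: esym (add_Zp_1 (p := v) x). Qed.

Lemma block_orbitE b : block_orbit b = [set shift t b | t : 'I_v].
Proof.
apply: eq_imset => k; rewrite -[in RHS](natr_Zp k).
elim: (nat_of_ord k) => [|i IHi] /=; first by rewrite shift0.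
by rewrite IHi translate_shift shiftD mulrSr.
Qed.

Lemma CSTS_shift B b t : is_CSTS B -> b \in B -> shift t b \in B.
Proof.
case=> _ _ Btr bB; rewrite -(natr_Zp t).
elim: (nat_of_ord t) => [|k IHk]; first by rewrite shift0.
by rewrite mulrSr -shiftD -translate_shift Btr.
Qed.

Lemma CSTS_block_eq B b1 b2 x y : is_CSTS B -> b1 \in B -> b2 \in B -> x != y ->
  x \in b1 -> y \in b1 -> x \in b2 -> y \in b2 -> b1 = b2.
Proof.
case=> _ Bpair _ b1B b2B xy x1 y1 x2 y2.
have /eqP/cards1P[c Bxy] := Bpair x y xy.
have /set1P-> : b1 \in [set c] by rewrite -Bxy inE b1B x1 y1.
by have /set1P-> : b2 \in [set c] by rewrite -Bxy inE b2B x2 y2.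
Qed.

Lemma shift_fixed_eq0 b t : coprime v #|b| -> shift t b = b -> t = 0.
Proof.
move=> cop fix_b.
(* Comparing the sums of the elements of [shift t b] and [b] gives [t *+ #|b| = 0]. *)
have : \sum_(x in shift t b) x = \sum_(x in b) x by rewrite fix_b.
rewrite big_imset /=; last by move=> x y _ _; apply: addIr.
rewrite big_split sumr_const /= -[RHS]addr0 => /addrI.
rewrite Zp_mulrn => /(congr1 val) /= /eqP; rewrite -/(dvdn _ _) Gauss_dvdl //.
move=> /dvdnP[[|q] tE]; first exact: val_inj.
by have := ltn_ord t; rewrite tE mulSn; lia.
Qed.

Section Blocks.
Variables (B : {set {set 'I_v}}) (b : {set 'I_v}).
Hypotheses (csts_B : is_CSTS B) (bB : b \in B).

Lemma CSTS_diffs_inj : coprime v 3 ->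
  {in offdiag b &, injective (fun xy => xy.2 - xy.1)}.
Proof.
move=> cop [x1 y1] [x2 y2]; rewrite !mem_offdiag /=.
move=> /and3P[x1b y1b x1y1] /and3P[x2b y2b _] E.
case: (eqVneq y1 y2) => [ey|y12]; first by move: E; rewrite ey => /addrI/oppr_inj->.
have fix_b : shift (y1 - x1) b = b.
  apply: (CSTS_block_eq csts_B (CSTS_shift _ csts_B bB) bB y12) => //.
    by rewrite mem_shift subKr.
  by rewrite mem_shift E subKr.
have cop_b : coprime v #|b| by have [-> //] := csts_B.
have /eqP := shift_fixed_eq0 cop_b fix_b.
by rewrite subr_eq0 eq_sym (negbTE x1y1).
Qed.

Lemma card_diffs_CSTS : coprime v 3 -> #|diffs b| = 6%N.
Proof.
move=> cop; have [b3 _ _] := csts_B.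
by rewrite card_diffs ?b3 //; apply: CSTS_diffs_inj.
Qed.

Lemma CSTS_diffs_meet b' z : b' \in B -> z \in diffs b -> z \in diffs b' ->
  exists t, b' = shift t b.
Proof.
move=> b'B /diffsP[x [y [xb yb xy ->]]] /diffsP[x' [y' [x'b' y'b' x'y' E]]].
exists (x' - x); apply: esym (CSTS_block_eq csts_B (CSTS_shift _ csts_B bB) b'B x'y' _ _ x'b' y'b').
  by rewrite mem_shift subKr.
by rewrite mem_shift opprB addrA addrAC -E subrK.
Qed.

End Blocks.

Lemma block_orbit_CSTS B b : coprime v 3 -> is_CSTS B -> b \in B ->
  block_orbit b = [set b' in B | diffs b' == diffs b].
Proof.
move=> cop csts_B bB; rewrite block_orbitE; apply/setP => b'; rewrite inE.
apply/imsetP/andP => [[t _ ->]|[b'B /eqP Db']].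
  by rewrite CSTS_shift // diffs_shift.
have /card_gt0P[z zb] : (0 < #|diffs b|)%N by rewrite (card_diffs_CSTS csts_B bB cop).
have zb' : z \in diffs b' by rewrite Db'.
by have [t ->] := CSTS_diffs_meet csts_B bB b'B zb zb'; exists t.
Qed.

Lemma CSTS_orbits_le B (X : {set {set 'I_v}}) : coprime v 3 -> is_CSTS B -> X \subset B ->
  (#|[set block_orbit b | b in X]| * 6 <= v.-1)%N.
Proof.
move=> cop csts_B /subsetP XB; set F := [set diffs b | b in X].
have -> : [set block_orbit b | b in X] = [set [set b' in B | diffs b' == D] | D in F].
  rewrite -imset_comp; apply: eq_in_imset => b bX.
  exact: block_orbit_CSTS (XB b bX).
apply: leq_trans (leq_mul (leq_imset_card _ _) (leqnn 6)) _.
have trivF : trivIset F.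
  apply/trivIsetP => _ _ /imsetP[b1 b1X ->] /imsetP[b2 b2X ->] D12.
  apply/pred0P => z /=; apply/andP => -[z1 z2].
  have [t Eb2] := CSTS_diffs_meet csts_B (XB b1 b1X) (XB b2 b2X) z1 z2.
  by move: D12; rewrite Eb2 diffs_shift eqxx.
have cardF : (\sum_(D in F) #|D| = #|F| * 6)%N.
  rewrite -sum_nat_const; apply: eq_bigr => _ /imsetP[b bX ->].
  exact: card_diffs_CSTS csts_B (XB b bX) cop.
have -> : v.-1 = #|[set~ (0 : 'I_v)]| by rewrite cardsC1 card_ord.
rewrite -cardF (eqP trivF).
apply/subset_leq_card/bigcupsP => _ /imsetP[b _ ->].
by apply/subsetP => z zb; rewrite !inE; apply: contraTneq zb => ->; apply: diffs_neq0.
Qed.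

Lemma block_orbit_shift b t : block_orbit (shift t b) = block_orbit b.
Proof.
rewrite !block_orbitE; apply/setP => c.
apply/imsetP/imsetP => -[u _ ->]; first by exists (t + u); rewrite ?shiftD.
by exists (u - t); rewrite // shiftD addrC subrK.
Qed.

Section Development.
Variables (n : nat) (S : 'I_n -> {set 'I_v}).
Hypothesis dfS : difference_family S.

Lemma CSTS_development : is_CSTS (development S).
Proof.
have [S3 Scover Suniq] := dfS; split.
- by move=> _ /imset2P[j t _ _ ->]; rewrite card_shift.
- move=> x y xy; have z0 : y - x != 0 by rewrite subr_eq0 eq_sym.
  have [j [a [aS azS]]] := Scover _ z0.
  apply/eqP/cards1P; exists (shift (x - a) (S j)); apply/setP => c; rewrite in_set in_set1.
  apply/idP/eqP => [|->].
    case/andP => /imset2P[j' t _ _ ->]; rewrite !mem_shift => /andP[xc yc].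
    have yc' : (x - t) + (y - x) \in S j' by rewrite addrAC subrKC.
    by have [-> ->] := Suniq _ _ _ _ _ z0 aS azS xc yc'; rewrite subKr.
  rewrite !mem_shift subKr opprB addrCA aS azS /= andbT.
  by apply/imset2P; exists j (x - a).
- move=> _ /imset2P[j t _ _ ->]; rewrite translate_shift shiftD.
  by apply/imset2P; exists j (t + 1).
Qed.

Lemma common_base_blocks_flip (P : pred 'I_n) :
  common_base_blocks (development S) (development (flip_blocks S P)) =
  #|[set j | ~~ P j]|.
Proof.
rewrite /common_base_blocks.
have -> : [set block_orbit b | b in development S :&: development (flip_blocks S P)] =
          [set block_orbit (S j) | j in [set j | ~~ P j]].
  apply/setP => O; apply/imsetP/imsetP => -[x].
    rewrite inE => /andP[/imset2P[j t _ _ ->] /imset2P[j' t' _ _ Ej]] ->.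
    exists j; last by rewrite block_orbit_shift.
    move: Ej; rewrite inE /flip_blocks; case: ifP => Pj' Ej.
      by move: (difference_family_shift_negs j j' t t' dfS); rewrite Ej eqxx.
    by rewrite (difference_family_shift_eq dfS Ej) Pj'.
  rewrite inE => NPj ->; exists (S x) => //.
  rewrite inE; apply/andP; split; apply/imset2P; exists x 0 => //; rewrite shift0 //.
  by rewrite /flip_blocks (negbTE NPj).
rewrite card_in_imset // => j1 j2 _ _ E12.
have : S j1 \in block_orbit (S j2) by rewrite -E12 block_orbitE; apply/imsetP; exists 0; rewrite ?shift0.
rewrite block_orbitE => /imsetP[u _ E].
by apply: (difference_family_shift_eq (t := 0) (t' := u) dfS); rewrite shift0.
Qed.

End Development.

End CyclicSTS.

Section OddModulus.
Variables (m h : nat).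
Hypothesis vE : m.+1 = (2 * h)%N.
Local Notation v := m.+2.

Definition zabs (z : 'I_v) : nat := if (z <= h)%N then nat_of_ord z else (v - z)%N.

Lemma val_oppZp (z : 'I_v) : nat_of_ord (- z) = ((v - z) %% v)%N.
Proof. by []. Qed.

Lemma zabs_opp z : zabs (- z) = zabs z.
Proof.
rewrite /zabs val_oppZp; have := ltn_ord z.
case: (posnP (nat_of_ord z)) => [->|z0 zv]; first by rewrite subn0 modnn.
rewrite modn_small; last lia.
by case: ifP; case: ifP; lia.
Qed.

Lemma zabs_bounds z : z != 0 -> (0 < zabs z <= h)%N.
Proof.
move=> z0; have := ltn_ord z.
have : nat_of_ord z != 0%N by apply: contra z0 => /eqP z0; apply/eqP/val_inj.
by rewrite /zabs; case: ifP; lia.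
Qed.

Lemma zabs_natr e : (0 < e <= h)%N -> zabs e%:R = e.
Proof. by move=> he; rewrite /zabs Zp_nat /= modn_small; [rewrite ifT; lia | lia]. Qed.

Lemma eq_zabs x y : zabs x = zabs y -> x = y \/ x = - y.
Proof.
rewrite /zabs => E; have xv := ltn_ord x; have yv := ltn_ord y.
case: (posnP (nat_of_ord y)) => y0.
  by left; apply/val_inj => /=; move: E; rewrite y0 leq0n; case: ifP; lia.
move: E; case: ifP => hx; case: ifP => hy E.
- by left; apply/val_inj.
- by right; apply/val_inj => /=; rewrite modn_small; lia.
- by right; apply/val_inj => /=; rewrite modn_small; lia.
- by left; apply/val_inj => /=; lia.
Qed.

Lemma opp_fixed_eq0 (x : 'I_v) : - x = x -> x = 0.
Proof.
move/(congr1 (@nat_of_ord _)); rewrite val_oppZp => E; apply/val_inj => /=.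
have := ltn_ord x; case: (posnP (nat_of_ord x)) => // x0 xv.
by move: E; rewrite modn_small; lia.
Qed.

End OddModulus.

Local Close Scope ring_scope.

Definition tcoord (s : nat) (t : nat * nat * nat) : nat :=
  match s with 0 => t.1.1 | 1 => t.1.2 | _ => t.2 end.

Definition heffter_elems (D : seq (nat * nat * nat)) : seq nat :=
  [seq tcoord 0 t | t <- D] ++ [seq tcoord 1 t | t <- D] ++ [seq tcoord 2 t | t <- D].

Definition heffter_system n (D : seq (nat * nat * nat)) : bool :=
  [&& size D == n,
      all (fun t => (t.2 == t.1.1 + t.1.2) || (t.1.1 + t.1.2 + t.2 == 6 * n + 1)) D,
      all (fun e => 0 < e <= 3 * n) (heffter_elems D)
    & uniq (heffter_elems D)].

Section HeffterSystem.
Variables (n : nat) (D : seq (nat * nat * nat)).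
Hypothesis HD : heffter_system n D.
Local Notation t_ j := (nth (0, 0, 0) D j).

Lemma size_heffter : size D = n.
Proof. by case/and4P: HD => /eqP. Qed.

Lemma size_heffter_elems : size (heffter_elems D) = 3 * n.
Proof. by rewrite /heffter_elems !size_cat !size_map size_heffter; lia. Qed.

Lemma nth_heffter_elems s j : s < 3 -> j < n ->
  nth 0 (heffter_elems D) (s * n + j) = tcoord s (t_ j).
Proof.
move=> s3 jn; have sD := size_heffter; rewrite /heffter_elems.
rewrite nth_cat size_map sD; case: s s3 => [|[|[|//]]] _.
- by rewrite jn (nth_map (0, 0, 0)) // sD.
- rewrite mul1n ltnNge leq_addr /= addKn nth_cat size_map sD jn.
  by rewrite (nth_map (0, 0, 0)) // sD.
rewrite ltnNge (_ : n <= 2 * n + j) //=; last lia.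
rewrite nth_cat size_map sD ltnNge (_ : n <= 2 * n + j - n) //=; last lia.
by rewrite (_ : 2 * n + j - n - n = j) ?(nth_map (0, 0, 0)) ?sD //; lia.
Qed.

Lemma heffter_coord_inj s s' j j' : s < 3 -> s' < 3 -> j < n -> j' < n ->
  tcoord s (t_ j) = tcoord s' (t_ j') -> s = s' /\ j = j'.
Proof.
move=> s3 s'3 jn j'n; rewrite -!nth_heffter_elems // => E.
have uD : uniq (heffter_elems D) by case/and4P: HD.
have i1 : s * n + j < 3 * n by case: s s3 {E} => [|[|[|]]] //= _; lia.
have i2 : s' * n + j' < 3 * n by case: s' s'3 {E} => [|[|[|]]] //= _; lia.
move/eqP: E; rewrite nth_uniq ?size_heffter_elems // => /eqP.
by case: s s3 {i1} => [|[|[|]]] //; case: s' s'3 {i2} => [|[|[|]]] // _ _ e; split; lia.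
Qed.

Lemma heffter_coord_bounds s j : s < 3 -> j < n -> 0 < tcoord s (t_ j) <= 3 * n.
Proof.
move=> s3 jn; rewrite -nth_heffter_elems //.
case/and4P: HD => _ _ /allP-> //; apply: mem_nth; rewrite size_heffter_elems.
by case: s s3 => [|[|[|]]] //= _; lia.
Qed.

Lemma heffter_coord_onto e : 0 < e <= 3 * n ->
  exists s j, [/\ s < 3, j < n & tcoord s (t_ j) = e].
Proof.
move=> he; have [_ _ rng uD] := and4P HD.
have : e \in heffter_elems D.
  have sub : {subset heffter_elems D <= iota 1 (3 * n)}.
    by move=> x /(allP rng); rewrite mem_iota; lia.
  have le_size : size (iota 1 (3 * n)) <= size (heffter_elems D).
    by rewrite size_iota size_heffter_elems.
  have [_ ->] := uniq_min_size uD sub le_size.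
  by rewrite mem_iota; lia.
case/(nthP 0) => i; rewrite size_heffter_elems => i3n <-.
have n0 : 0 < n by lia.
have s3 : i %/ n < 3 by rewrite ltn_divLR // mulnC.
have jn : i %% n < n by rewrite ltn_mod.
by exists (i %/ n), (i %% n); rewrite -nth_heffter_elems // -divn_eq.
Qed.

End HeffterSystem.

Local Open Scope ring_scope.

Section HeffterFamily.
Variables (m n : nat) (D : seq (nat * nat * nat)).
Hypotheses (vE : m.+1 = (6 * n)%N) (HD : heffter_system n D).
Local Notation v := m.+2.
Local Notation t_ j := (nth (0, 0, 0)%N D j).

Definition heffter_block (j : nat) : {set 'I_v} :=
  [set 0; (t_ j).1.1%:R; ((t_ j).1.1 + (t_ j).1.2)%N%:R].

(* The six differences of the block {0, p, p + q} are the [+- hgen s j], s < 3, each realized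
   by the pair {hlow s j, hlow s j + hgen s j}. *)
Definition hgen (s j : nat) : 'I_v :=
  (if s == 2 then (t_ j).1.1 + (t_ j).1.2 else tcoord s (t_ j))%N%:R.

Definition hlow (s j : nat) : 'I_v := if s == 1 then (t_ j).1.1%:R else 0.

Lemma zabs_hgen s j : (s < 3)%N -> (j < n)%N ->
  zabs (3 * n)%N (hgen s j) = tcoord s (t_ j).
Proof.
move=> s3 jn; have vE' : m.+1 = (2 * (3 * n))%N by lia.
have cb := heffter_coord_bounds HD s3 jn.
case: s s3 cb => [|[|[|//]]] _ cb; rewrite /hgen /=; try exact: zabs_natr.
have : t_ j \in D by rewrite mem_nth // (size_heffter HD).
case/and4P: HD => _ /allP tri _ _ /tri /orP[/eqP<-|/eqP tE]; first exact: zabs_natr.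
have -> : ((t_ j).1.1 + (t_ j).1.2)%N%:R = - (t_ j).2%:R :> 'I_v.
  apply/eqP; rewrite -subr_eq0 opprK -natrD.
  rewrite tE (_ : (6 * n + 1)%N = v); last lia.
  by apply/eqP/val_inj; rewrite Zp_nat /= modnn.
by rewrite zabs_opp // zabs_natr.
Qed.

Lemma hgen_neq0 s j : (s < 3)%N -> (j < n)%N -> hgen s j != 0.
Proof.
move=> s3 jn; apply: contraTneq (heffter_coord_bounds HD s3 jn) => g0.
by rewrite -zabs_hgen // g0.
Qed.

Lemma heffter_block_hlow s j : (s < 3)%N ->
  hlow s j \in heffter_block j /\ hlow s j + hgen s j \in heffter_block j.
Proof.
case: s => [|[|[|//]]] _; rewrite /hlow /hgen /= ?add0r -?natrD !inE.
all: by rewrite !eqxx ?orbT.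
Qed.

Lemma heffter_block_pair j a z : z != 0 ->
  a \in heffter_block j -> a + z \in heffter_block j ->
  exists2 s, (s < 3)%N &
    (a = hlow s j /\ z = hgen s j) \/ (a = hlow s j + hgen s j /\ z = - hgen s j).
Proof.
move=> z0 aB; have [b azE] : exists b, a + z = b by exists (a + z).
have zE : z = b - a by rewrite -azE addrC addKr.
rewrite azE {}zE in z0 *; move: aB.
rewrite /heffter_block !inE -!orbA; set p := _%:R; set r := _%:R.
case/or3P=> /eqP aE /or3P[]/eqP bE; rewrite {}aE {}bE ?subrr ?eqxx // in z0 *.
- by exists 0%N => //; left; rewrite subr0.
- by exists 2%N => //; left; rewrite subr0.
- by exists 0%N => //; right; rewrite add0r sub0r.
- by exists 1%N => //; left; rewrite /hgen /= /r natrD addrC addKr.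
- by exists 2%N => //; right; rewrite add0r sub0r.
- by exists 1%N => //; right; rewrite /hlow /hgen /= /r natrD; split => //; ring.
Qed.

Lemma card_heffter_block j : (j < n)%N -> #|heffter_block j| = 3.
Proof.
move=> jn; have g0 s : (s < 3)%N -> hgen s j != 0 by move=> s3; apply: hgen_neq0.
have [[p0 q0] r0] := (g0 0%N isT, g0 1%N isT, g0 2%N isT).
move: p0 q0 r0; rewrite /hgen /= => p0 q0 r0.
rewrite /heffter_block setUC cardsU1 cards2 !inE (negbTE r0) [0 == _]eq_sym (negbTE p0).
by rewrite natrD -subr_eq0 addrAC subrr add0r q0.
Qed.

Lemma heffter_difference_family : difference_family (fun j : 'I_n => heffter_block j).
Proof.
have vE' : m.+1 = (2 * (3 * n))%N by lia.
have zabs_pair s j a z : (s < 3)%N ->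
    (a = hlow s j /\ z = hgen s j) \/ (a = hlow s j + hgen s j /\ z = - hgen s j) ->
    (j < n)%N -> zabs (3 * n)%N z = tcoord s (t_ j).
  by move=> s3 [[_ ->]|[_ ->]] jn; rewrite ?(zabs_opp vE') zabs_hgen.
split; first by move=> j; apply: card_heffter_block.
- move=> z z0.
  have [s [j [s3 jn zE]]] := heffter_coord_onto HD (zabs_bounds vE' z0).
  have [lowB highB] := heffter_block_hlow j s3.
  exists (Ordinal jn); rewrite -(zabs_hgen s3 jn) in zE.
  case: (eq_zabs vE' (esym zE)) => ->; first by exists (hlow s j).
  by exists (hlow s j + hgen s j); rewrite addrK.
move=> j j' a a' z z0 aB azB a'B a'zB.
have [s s3 pair] := heffter_block_pair z0 aB azB.
have [s' s'3 pair'] := heffter_block_pair z0 a'B a'zB.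
have := zabs_pair _ _ _ _ s3 pair (ltn_ord j).
rewrite (zabs_pair _ _ _ _ s'3 pair' (ltn_ord j')) => /esym E.
have [ss' /val_inj jj'] := heffter_coord_inj HD s3 s'3 (ltn_ord j) (ltn_ord j') E.
subst s' j'; split => //.
have g0 := hgen_neq0 s3 (ltn_ord j).
case: pair pair' => -[-> zE] [] [-> zE'] //; move: g0; rewrite zE in zE'.
  by rewrite (opp_fixed_eq0 vE' (esym zE')) eqxx.
by rewrite (opp_fixed_eq0 vE' zE') eqxx.
Qed.

End HeffterFamily.

Local Close Scope ring_scope.

Definition triple_seq (f g c : nat -> nat) (L : nat) : seq (nat * nat * nat) :=
  [seq (f r, g r, c r) | r <- iota 1 L].

Lemma map_tcoord_triple_seq s f g c L :
  [seq tcoord s t | t <- triple_seq f g c L] = [seq tcoord s (f r, g r, c r) | r <- iota 1 L].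
Proof. by rewrite -map_comp. Qed.

Lemma all_triple_seq (P : pred (nat * nat * nat)) f g c L :
  (forall r, 0 < r <= L -> P (f r, g r, c r)) -> all P (triple_seq f g c L).
Proof. by move=> HP; rewrite all_map; apply/allP => r; rewrite mem_iota => hr; apply: HP; lia. Qed.

Lemma all_map_iota (P : pred nat) (f : nat -> nat) L :
  (forall r, 0 < r <= L -> P (f r)) -> all P [seq f r | r <- iota 1 L].
Proof. by move=> HP; rewrite all_map; apply/allP => r; rewrite mem_iota => hr; apply: HP; lia. Qed.

Lemma uniq_map_iota (f : nat -> nat) L :
  (forall r r', 0 < r <= L -> 0 < r' <= L -> f r = f r' -> r = r') ->
  uniq [seq f r | r <- iota 1 L].
Proof.
move=> f_inj; rewrite map_inj_in_uniq ?iota_uniq // => r r'.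
by rewrite !mem_iota => hr hr'; apply: f_inj; lia.
Qed.

Lemma disjoint_map_iota (f g : nat -> nat) L1 L2 :
  (forall r r', 0 < r <= L1 -> 0 < r' <= L2 -> f r <> g r') ->
  ~~ has (mem [seq f r | r <- iota 1 L1]) [seq g r | r <- iota 1 L2].
Proof.
move=> fg; apply/hasP => -[_ /mapP[r' hr' ->] /mapP[r hr E]].
rewrite mem_iota in hr; rewrite mem_iota in hr'.
by apply: (fg r r'); [lia | lia | rewrite E].
Qed.

Ltac solve_uniq_cat :=
  let inj := apply: uniq_map_iota => r r' hr hr' /=; lia in
  let disj := apply: disjoint_map_iota => r r' hr hr' /=; lia in
  repeat (rewrite cat_uniq; apply/and3P; split;
          [inj | repeat (rewrite has_cat negb_or; apply/andP; split); disj | ]);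
  inj.

Ltac splitand := repeat match goal with |- is_true (_ && _) => apply/andP; split end.

Ltac solve_heffter_system :=
  apply/and4P; split;
  [ rewrite !size_cat !size_map !size_iota; apply/eqP; lia
  | rewrite !all_cat; splitand; apply: all_triple_seq => r hr /=;
    apply/orP; first [left; apply/eqP; lia | right; apply/eqP; lia]
  | rewrite /heffter_elems !map_cat !map_tcoord_triple_seq -!catA !all_cat;
    splitand; apply: all_map_iota => r hr /=; first [apply/andP; split; lia | lia]
  | rewrite /heffter_elems !map_cat !map_tcoord_triple_seq -!catA; solve_uniq_cat ].

(* Peltesohn's solution of Heffter's first difference problem, one family for each residue of
   n modulo 4 (n >= 7); each [triple_seq f g c L] lists the triples (f r, g r, c r), 1 <= r <= L. *)
Definition peltesohn0 (s : nat) : seq (nat * nat * nat) :=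
  triple_seq (fun _ => 1) (fun _ => 7*s + 3) (fun _ => 7*s + 4) 1 ++
  triple_seq (fun _ => 2*s + 3) (fun _ => 4*s - 2) (fun _ => 6*s + 1) 1 ++
  triple_seq (fun _ => 6*s + 2) (fun _ => 4*s) (fun _ => 10*s + 2) 1 ++
  triple_seq (fun r => 4*s + 3 - 2*r) (fun r => 4*s + r + 1) (fun r => 8*s + 4 - r) (s - 1) ++
  triple_seq (fun r => 2*s + 3 - 2*r) (fun r => 5*s + r) (fun r => 7*s + 3 - r) s ++
  triple_seq (fun r => 4*s - 2*r - 2) (fun r => 8*s + r + 3) (fun r => 12*s + 1 - r) s ++
  triple_seq (fun r => 2*s - 2*r - 2) (fun r => 9*s + r + 3) (fun r => 11*s + 1 - r) (s - 2).

Definition peltesohn1 (s : nat) : seq (nat * nat * nat) :=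
  triple_seq (fun _ => 2*s + 3) (fun _ => 10*s + 1) (fun _ => 12*s + 3) 1 ++
  triple_seq (fun _ => 4*s + 2) (fun _ => 9*s + 1) (fun _ => 11*s + 4) 1 ++
  triple_seq (fun _ => 3) (fun _ => 4*s) (fun _ => 4*s + 3) 1 ++
  triple_seq (fun _ => 6*s + 3) (fun _ => 4*s + 1) (fun _ => 10*s + 4) 1 ++
  triple_seq (fun r => 4*s - 2*r) (fun r => 4*s + r + 3) (fun r => 8*s + 3 - r) (2*s - 1) ++
  triple_seq (fun r => 4*s + 1 - 2*r) (fun r => 8*s + r + 2) (fun r => 12*s + 3 - r) (s - 2) ++
  triple_seq (fun r => 2*s + 3 - 2*r) (fun r => 9*s + r + 1) (fun r => 11*s + 4 - r) (s - 1) ++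
  triple_seq (fun _ => 1) (fun _ => 10*s + 2) (fun _ => 10*s + 3) 1.

Definition peltesohn2 (s : nat) : seq (nat * nat * nat) :=
  triple_seq (fun _ => 2) (fun _ => 4*s - 2) (fun _ => 4*s) 1 ++
  triple_seq (fun _ => 4*s + 4) (fun _ => 8*s + 3) (fun _ => 12*s + 6) 1 ++
  triple_seq (fun r => 6*s + 5 - 2*r) (fun r => 4*s + r + 1) (fun r => 10*s + 6 - r) 2 ++
  triple_seq (fun r => 4*s - 2*r - 2) (fun r => 4*s + r + 4) (fun r => 8*s + 2 - r) (s - 2) ++
  triple_seq (fun r => 2*s - 2*r) (fun r => 5*s + r + 2) (fun r => 7*s + 2 - r) (s - 2) ++
  triple_seq (fun _ => 2*s) (fun _ => 6*s + 2) (fun _ => 8*s + 2) 1 ++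
  triple_seq (fun _ => 1) (fun _ => 7*s + 2) (fun _ => 7*s + 3) 1 ++
  triple_seq (fun r => 4*s + 3 - 2*r) (fun r => 8*s + r + 3) (fun r => 12*s + 6 - r) s ++
  triple_seq (fun r => 2*s + 3 - 2*r) (fun r => 9*s + r + 3) (fun r => 11*s + 6 - r) s.

Definition peltesohn3 (s : nat) : seq (nat * nat * nat) :=
  triple_seq (fun _ => 2) (fun _ => 12*s - 4) (fun _ => 12*s - 3) 1 ++
  triple_seq (fun r => 4*s - 2*r - 3) (fun r => 4*s + r - 1) (fun r => 8*s - r - 4) (s - 2) ++
  triple_seq (fun _ => 1) (fun _ => 5*s - 2) (fun _ => 5*s - 1) 1 ++
  triple_seq (fun r => 2*s - 2*r - 1) (fun r => 5*s + r - 1) (fun r => 7*s - r - 2) (s - 2) ++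
  triple_seq (fun r => 4*s + 1 - 2*r) (fun r => 6*s + r - 3) (fun r => 10*s - r - 2) 2 ++
  triple_seq (fun _ => 2*s - 1) (fun _ => 8*s - 4) (fun _ => 10*s - 5) 1 ++
  triple_seq (fun r => 4*s - 2*r) (fun r => 8*s + r - 4) (fun r => 12*s - r - 4) (2*s - 2).

Lemma heffter_peltesohn0 s : 2 <= s -> heffter_system (4 * s) (peltesohn0 s).
Proof. by move=> hs; rewrite /peltesohn0; solve_heffter_system. Qed.

Lemma heffter_peltesohn1 s : 2 <= s -> heffter_system (4 * s + 1) (peltesohn1 s).
Proof. by move=> hs; rewrite /peltesohn1; solve_heffter_system. Qed.

Lemma heffter_peltesohn2 s : 2 <= s -> heffter_system (4 * s + 2) (peltesohn2 s).
Proof. by move=> hs; rewrite /peltesohn2; solve_heffter_system. Qed.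

Lemma heffter_peltesohn3 s : 2 <= s -> heffter_system (4 * s - 1) (peltesohn3 s).
Proof. by move=> hs; rewrite /peltesohn3; solve_heffter_system. Qed.

Definition heffter_small (n : nat) : seq (nat * nat * nat) :=
  match n with
  | 1 => [:: (1, 2, 3)]
  | 2 => [:: (1, 3, 4); (2, 5, 6)]
  | 3 => [:: (1, 4, 5); (2, 6, 8); (3, 7, 9)]
  | 4 => [:: (1, 5, 6); (3, 7, 10); (4, 8, 12); (2, 9, 11)]
  | 5 => [:: (1, 6, 7); (2, 8, 10); (3, 9, 12); (5, 11, 15); (4, 13, 14)]
  | _ => [:: (1, 7, 8); (2, 9, 11); (3, 10, 13); (5, 12, 17); (4, 14, 18); (6, 15, 16)]
  end.

Lemma exists_heffter_system n : 1 <= n -> exists D, heffter_system n D.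
Proof.
move=> n1; case: (leqP n 6) => [n6|n7].
  by exists (heffter_small n); case: n n1 n6 => [|[|[|[|[|[|[|]]]]]]].
have [q [r [r4 nE]]] : exists q r, r < 4 /\ n = 4 * q + r.
  by exists (n %/ 4), (n %% 4); rewrite ltn_mod mulnC -divn_eq.
case: r r4 nE => [|[|[|[|//]]]] _ nE; rewrite nE.
- by exists (peltesohn0 q); rewrite addn0; apply: heffter_peltesohn0; lia.
- by exists (peltesohn1 q); apply: heffter_peltesohn1; lia.
- by exists (peltesohn2 q); apply: heffter_peltesohn2; lia.
- exists (peltesohn3 q.+1); rewrite (_ : 4 * q + 3 = 4 * q.+1 - 1); last lia.
  by apply: heffter_peltesohn3; lia.
Qed.

Lemma card_ord_lt n k : k <= n -> #|[set j : 'I_n | j < k]| = k.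
Proof.
move=> kn; have -> : [set j : 'I_n | j < k] = [set widen_ord kn i | i : 'I_k].
  apply/setP => j; rewrite inE; apply/idP/imsetP => [jk|[i _ ->]]; last exact: (ltn_ord i).
  by exists (Ordinal jk); last exact: val_inj.
by rewrite card_imset ?card_ord // => x y /(congr1 val) /= /val_inj.
Qed.

Theorem mainTheorem2 (n : nat) : 1 <= n ->
  forall k : nat, Int_c (6 * n + 1) k <-> k <= n.
Proof.
move=> n1 k; set m := (6 * n - 1)%N.
have vE : m.+1 = 6 * n by rewrite /m; lia.
have -> : 6 * n + 1 = m.+2 by lia.
split => [[B1 [B2 [csts1 _ <-]]] | kn].
  have cop : coprime m.+2 3.
    by rewrite (_ : m.+2 = 2 * n * 3 + 1); [rewrite coprime_sym /coprime gcdnMDl | lia].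
  have := CSTS_orbits_le cop csts1 (subsetIl B1 B2).
  by rewrite /common_base_blocks /=; lia.
have [D HD] := exists_heffter_system n1.
have dfS := heffter_difference_family vE HD.
exists (development (fun j : 'I_n => heffter_block m D j)).
exists (development (flip_blocks (fun j : 'I_n => heffter_block m D j) (fun j => k <= j))).
split; [exact: CSTS_development | exact/CSTS_development/difference_family_flip |].
rewrite common_base_blocks_flip // -[RHS](card_ord_lt kn); apply: eq_card => j.
by rewrite !inE -ltnNge.
Qed.
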